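(* For integers $r\ge 2$ and $n\ge r+1$, $$\mathrm{ex}_r(n,\Delta_{r+1}^r)\le \frac{(r-1)(n-r+1)+1}{r(n-r)}\binom{n}{r}.$$
   Context: An $r$-uniform hypergraph ($r$-graph) is a pair $(V,E)$ with $E$ a family of $r$-element subsets of $V$. $\Delta_{r+1}^r$ denotes the complete $r$-graph on $r+1$ vertices (all $r$-subsets of an $(r+1)$-set as edges). $\mathrm{ex}_r(n,\Delta_{r+1}^r)$ is the maximum number of edges in an $r$-graph on $n$ vertices containing no sub-hypergraph isomorphic to $\Delta_{r+1}^r$. *)

From mathcomp Require Import all_boot all_order all_algebra.
Set Implicit Arguments. Unset Strict Implicit. Unset Printing Implicit Defensive.

Definition is_rgraph (r n : nat) (E : {set {set 'I_n}}) : bool :=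
  [forall e in E, #|e| == r].

(* E contains a copy of Delta_{r+1}^r: an (r+1)-set S all of whose
   r-subsets are edges of E. *)
Definition contains_Delta (r n : nat) (E : {set {set 'I_n}}) : bool :=
  [exists S : {set 'I_n}, (#|S| == r.+1) &&
     [forall e : {set 'I_n}, ((e \subset S) && (#|e| == r)) ==> (e \in E)]].

Definition ex_Delta (r n : nat) : nat :=
  \max_(E : {set {set 'I_n}} | is_rgraph r E && ~~ contains_Delta r E) #|E|.

(* For an (r-1)-set A let d(A) be the number of edges containing A.  Double
   counting gives sum_A d(A) = r |E| and sum_A d(A)^2 = sum_(e in E) sum_(a in e)
   d(e - a).  For an edge e and a vertex v outside e, Delta-freeness forbids
   all r sets v + (e - a) to be edges, so the inner sum is at most
   r + (n - r)(r - 1).  Cauchy-Schwarz over the C(n, r-1) sets A then gives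
   r^2 |E| <= C(n, r-1) (r + (n - r)(r - 1)), i.e. de Caen's bound
   r (n - r + 1) |E| <= ((r - 1)(n - r + 1) + 1) C(n, r), which is slightly
   stronger than the claim. *)

From mathcomp Require Import all_boot all_order all_algebra.
From mathcomp Require Import zify.

Set Implicit Arguments.
Unset Strict Implicit.
Unset Printing Implicit Defensive.

Lemma sqr_sum_le_card_sum_sqr (I : finType) (X : {set I}) (f : I -> nat) :
  (\sum_(i in X) f i) ^ 2 <= #|X| * \sum_(i in X) f i ^ 2.
Proof.
rewrite -(leq_pmul2l (isT : 0 < 2)) expnS expn1 big_distrlr big_distrr /=.
under eq_bigr do rewrite big_distrr /=.
apply: (@leq_trans (\sum_(i in X) \sum_(j in X) (f i ^ 2 + f j ^ 2))).
  by apply: leq_sum => i _; apply: leq_sum => j _; apply: nat_Cauchy.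
under eq_bigr do rewrite big_split /= sum_nat_const.
by rewrite big_split /= sum_nat_const -big_distrr /= addnn mul2n.
Qed.

Section FinsetCounting.
Variable T : finType.

Lemma card_set_in_sum (B : {set T}) (P : pred T) :
  #|[set x in B | P x]| = \sum_(x in B) P x.
Proof. by rewrite -sum1dep_card big_mkcondr; apply: eq_bigr => x _; case: (P x). Qed.

Lemma subset_card_succ_setD1 (A S : {set T}) :
  A \subset S -> #|A|.+1 = #|S| -> exists2 x, x \in S & A = S :\ x.
Proof.
move=> sAS cAS.
have /cards1P [x dx] : #|S :\: A| == 1 by rewrite cardsDS // -cAS subSnn.
have : x \in S :\: A by rewrite dx set11.
rewrite inE => /andP [xA xS]; exists x => //.
apply/eqP; rewrite eqEcard; apply/andP; split.
  by apply/subsetP => y yA; rewrite !inE (subsetP sAS) // andbT; apply: contraNneq xA => <-.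
by have := cardsD1 x S; rewrite xS -cAS; lia.
Qed.

Lemma big_subsets_card_pred (e : {set T}) (F : {set T} -> nat) :
  \sum_(A : {set T} | (A \subset e) && (#|A|.+1 == #|e|)) F A = \sum_(a in e) F (e :\ a).
Proof.
have inj_setD1 : {in e &, injective (fun a => e :\ a)}.
  move=> a b ae be eab; apply/eqP; apply: contraT => nab.
  have : a \in e :\ b by rewrite !inE nab.
  by rewrite -eab !inE eqxx.
rewrite -(big_imset _ inj_setD1) /=; apply: eq_bigl => A; apply/andP/imsetP.
  by case=> sAe /eqP /(subset_card_succ_setD1 sAe).
by case=> a ae ->; rewrite subD1set (cardsD1 a e) ae.
Qed.

End FinsetCounting.

Section Codegree.
Variables (T : finType) (r : nat) (E : {set {set T}}).
Hypothesis E_uniform : {in E, forall e : {set T}, #|e| = r}.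

Definition codegree (A : {set T}) : nat := #|[set e in E | A \subset e]|.

Lemma codegree_card_succ (A : {set T}) :
  #|A|.+1 = r -> codegree A = \sum_(w in ~: A) (w |: A \in E).
Proof.
move=> cA.
have inj_setU1 : {in ~: A &, injective (fun w => w |: A)}.
  move=> w w' wA w'A eww'; have : w \in w' |: A by rewrite -eww' setU11.
  by move: wA; rewrite !inE => /negbTE ->; rewrite orbF => /eqP.
rewrite /codegree -card_set_in_sum -(card_in_imset (sub_in2 _ inj_setU1)); last first.
  by move=> w; rewrite inE => /andP [].
apply: eq_card => e; rewrite inE; apply/andP/imsetP.
  case=> eE sAe; have [w we ->] := subset_card_succ_setD1 sAe (etrans cA (esym (E_uniform eE))).
  by exists w; rewrite ?setD1K // !inE eqxx setD1K.
by case=> w; rewrite !inE => /andP [_ wAE] ->; rewrite wAE subsetUr.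
Qed.

Lemma sum_codegree_mul (F : {set T} -> nat) :
  \sum_(A : {set T} | #|A|.+1 == r) codegree A * F A
    = \sum_(e in E) \sum_(a in e) F (e :\ a).
Proof.
transitivity (\sum_(A : {set T} | #|A|.+1 == r) \sum_(e in E | A \subset e) F A).
  by apply: eq_bigr => A _; rewrite -sum_nat_const; apply: eq_bigl => e; rewrite inE.
rewrite (exchange_big_dep (mem E)) /=; last by move=> A e _ /andP [].
apply: eq_bigr => e eE; rewrite -big_subsets_card_pred (E_uniform eE).
by apply: eq_bigl => A; rewrite eE andbC.
Qed.

Lemma sum_codegree :
  \sum_(A : {set T} | #|A|.+1 == r) codegree A = r * #|E|.
Proof.
under eq_bigr do rewrite -[codegree _]muln1.
rewrite (sum_codegree_mul (fun=> 1)).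
under eq_bigr => e eE do rewrite sum_nat_const muln1 (E_uniform eE).
by rewrite sum_nat_const mulnC.
Qed.

Hypothesis E_free :
  forall S : {set T}, #|S| = r.+1 -> exists2 x, x \in S & S :\ x \notin E.

Lemma card_swaps_lt (e : {set T}) (v : T) :
  e \in E -> v \notin e -> #|[set a in e | v |: (e :\ a) \in E]| < r.
Proof.
move=> eE ve.
have card_ve : #|v |: e| = r.+1 by rewrite cardsU1 ve (E_uniform eE).
(* The (r+1)-set v |: e misses an edge, and that edge is not e itself. *)
have [x] := E_free card_ve.
rewrite !inE => /orP [/eqP -> | xe]; first by rewrite setU1K // eE.
have swap_x : (v |: e) :\ x = v |: (e :\ x).
  apply/setP => w; rewrite !inE; case: (eqVneq w v) => [-> | //].
  by case: (eqVneq v x) xe ve => [-> -> |].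
rewrite swap_x -(E_uniform eE) => xE; apply: proper_card; apply/properP; split.
  by apply/subsetP => a; rewrite inE => /andP [].
by exists x; rewrite // inE xe (negbTE xE).
Qed.

Lemma sum_codegree_setD1_le (e : {set T}) :
  e \in E -> \sum_(a in e) codegree (e :\ a) <= r + (#|T| - r) * r.-1.
Proof.
move=> eE.
have codegree_setD1 a : a \in e ->
    codegree (e :\ a) = 1 + \sum_(v in ~: e) (v |: (e :\ a) \in E).
  move=> ae; rewrite codegree_card_succ; last by rewrite -(E_uniform eE) (cardsD1 a e) ae.
  rewrite setCD setUC big_setU1 /=; last by rewrite !inE ae.
  by rewrite setD1K // eE.
rewrite (eq_bigr _ codegree_setD1) big_split /= sum_nat_const (E_uniform eE) muln1.
rewrite leq_add2l exchange_big /=.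
have card_compl : #|~: e| = #|T| - r by rewrite -(E_uniform eE) -(cardsC e) addKn.
rewrite -card_compl -sum_nat_const; apply: leq_sum => v; rewrite inE => ve.
by have lt_r := card_swaps_lt eE ve; rewrite -ltnS (ltn_predK lt_r) -card_set_in_sum.
Qed.

Lemma sum_codegree_sqr_le :
  \sum_(A : {set T} | #|A|.+1 == r) codegree A ^ 2 <= #|E| * (r + (#|T| - r) * r.-1).
Proof.
under eq_bigr do rewrite expnS expn1.
rewrite sum_codegree_mul -sum_nat_const; apply: leq_sum => e.
exact: sum_codegree_setD1_le.
Qed.

Theorem card_Delta_free_le : 0 < r ->
  #|E| * (r * (#|T| - r.-1)) <= (r + (#|T| - r) * r.-1) * 'C(#|T|, r).
Proof.
move=> r_gt0; set K := r + _ * _; set M := #|E|.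
have card_pred_r : #|[set A : {set T} | #|A|.+1 == r]| = 'C(#|T|, r.-1).
  by rewrite -card_draws; apply: eq_card => A; rewrite !inE -(ltn_predK r_gt0).
have := sqr_sum_le_card_sum_sqr [set A : {set T} | #|A|.+1 == r] codegree.
rewrite !big_set card_pred_r sum_codegree => cauchy_schwarz.
have {cauchy_schwarz} : (r * M) ^ 2 <= 'C(#|T|, r.-1) * (M * K).
  exact: leq_trans cauchy_schwarz (leq_mul (leqnn _) sum_codegree_sqr_le).
have [-> // | M_gt0] := posnP M.
move: (#|T|) (mul_bin_left #|T| r.-1) => n; rewrite (ltn_predK r_gt0) => pascal cauchy_schwarz.
have r2M_le : r * r * M <= 'C(n, r.-1) * K.
  rewrite -(leq_pmul2l M_gt0) [X in _ <= X]mulnCA.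
  by have -> : M * (r * r * M) = (r * M) ^ 2 by lia.
rewrite -(leq_pmul2l r_gt0) [X in _ <= X]mulnCA pascal.
have -> : r * (M * (r * (n - r.-1))) = r * r * M * (n - r.-1) by lia.
have -> : K * ((n - r.-1) * 'C(n, r.-1)) = 'C(n, r.-1) * K * (n - r.-1) by lia.
by rewrite leq_mul2r r2M_le orbT.
Qed.

End Codegree.

Lemma Delta_free_setD1 (r n : nat) (E : {set {set 'I_n}}) : ~~ contains_Delta r E ->
  forall S : {set 'I_n}, #|S| = r.+1 -> exists2 x, x \in S & S :\ x \notin E.
Proof.
move=> freeE S cS; move: freeE; rewrite negb_exists => /forallP /(_ S).
rewrite cS eqxx /= negb_forall => /existsP [f].
rewrite negb_imply => /andP [/andP [fS /eqP cf] fE].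
have := subset_card_succ_setD1 fS; rewrite cf cS => /(_ erefl) [x xS fSx].
by exists x; rewrite // -fSx.
Qed.

Lemma ex_Delta_le (r n : nat) : 0 < r ->
  ex_Delta r n * (r * (n - r.-1)) <= (r + (n - r) * r.-1) * 'C(n, r).
Proof.
move=> r_gt0; have [-> | d_gt0] := posnP (r * (n - r.-1)); first by rewrite muln0.
rewrite -leq_divRL //; apply/bigmax_leqP => E /andP [rgraphE freeE]; rewrite leq_divRL //.
have E_uniform : {in E, forall e : {set 'I_n}, #|e| = r}.
  by move=> e eE; apply/eqP/(forall_inP rgraphE).
by have := card_Delta_free_le E_uniform (Delta_free_setD1 freeE) r_gt0; rewrite card_ord.
Qed.

Import Order.TTheory GRing.Theory Num.Theory.
Local Open Scope ring_scope.

Theorem mainTheorem7 (r n : nat) (hr : (2 <= r)%N) (hn : (r.+1 <= n)%N) :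
  (ex_Delta r n)%:R <=
    ((((r - 1) * (n - r + 1) + 1)%N)%:R / ((r * (n - r))%N)%:R)
      * ('C(n, r))%:R :> rat.
Proof.
have r_gt0 : (0 < r)%N by lia.
have nat_bound : (ex_Delta r n * (r * (n - r)) <= ((r - 1) * (n - r + 1) + 1) * 'C(n, r))%N.
  have -> : ((r - 1) * (n - r + 1) + 1 = r + (n - r) * r.-1)%N by nia.
  apply: leq_trans (ex_Delta_le n r_gt0); rewrite leq_mul2l leq_mul2l leq_sub2l ?orbT //.
  exact: leq_pred.
rewrite mulrAC ler_pdivlMr ?ltr0n ?muln_gt0 ?r_gt0 ?subn_gt0 //.
by rewrite -!natrM ler_nat.
Qed.
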